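(* Let $n\ge 2$ and let $\Delta$ be a finite subset of $\mathbb{A}^n_{\mathbb{C}}$. Then $\mathrm{Stab}(\Delta)=\{f\in\mathrm{Aut}(\mathbb{A}^n_{\mathbb{C}}): f(\Delta)=\Delta\}$ is a maximal subgroup of $\mathrm{Aut}(\mathbb{A}^n_{\mathbb{C}})$, and it is closed in $\mathrm{Aut}(\mathbb{A}^n_{\mathbb{C}})$.
   Context: $\mathrm{Aut}(\mathbb{A}^n_{\mathbb{C}})$ is the group of polynomial automorphisms of $\mathbb{A}^n_{\mathbb{C}}$, an ind-group for the filtration by degree; a subset is closed iff its intersection with the variety of automorphisms of degree $\le d$ is Zariski closed for every $d$. *)

From HB Require Import structures.
From mathcomp Require Import all_boot all_order all_algebra.
From mathcomp Require Import Rstruct.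
From mathcomp Require Import complex.
From mathcomp Require Import mpoly.
From Stdlib Require Rdefinitions.

Set Implicit Arguments.
Unset Strict Implicit.
Unset Printing Implicit Defensive.

Import GRing.Theory Num.Theory.
Local Open Scope ring_scope.

Definition CC : numClosedFieldType := (Rdefinitions.R)[i].

(** Polynomial endomorphisms of A^n_C: an n-tuple (f_1,...,f_n) of
    polynomials in n variables. *)
Definition polymap (n : nat) := n.-tuple {mpoly CC[n]}.

Definition pm_id (n : nat) : polymap n := [tuple 'X_i | i < n].

(** Composition: (f \o g)(x) = f (g x), i.e. substitute X_j := g_j in f_i. *)
Definition pm_comp (n : nat) (f g : polymap n) : polymap n :=
  [tuple comp_mpoly g (tnth f i) | i < n].

Definition pm_eval (n : nat) (f : polymap n) (x : 'I_n -> CC) : 'I_n -> CC :=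
  fun i => (tnth f i).@[x].

Definition is_aut (n : nat) (f : polymap n) : Prop :=
  exists g : polymap n, pm_comp f g = pm_id n /\ pm_comp g f = pm_id n.

Definition is_subgroup_aut (n : nat) (H : polymap n -> Prop) : Prop :=
  [/\ (forall f, H f -> is_aut f),
      H (pm_id n),
      (forall f g, H f -> H g -> H (pm_comp f g)) &
      (forall f g, H f -> pm_comp f g = pm_id n -> pm_comp g f = pm_id n -> H g)].

Definition is_maximal_subgroup_aut (n : nat) (S : polymap n -> Prop) : Prop :=
  [/\ is_subgroup_aut S,
      (exists f, is_aut f /\ ~ S f) &
      (forall H, is_subgroup_aut H -> (forall f, S f -> H f) ->
          (forall f, H f -> S f) \/ (forall f, is_aut f -> H f))].

Definition Stab (n : nat) (Delta : ('I_n -> CC) -> Prop) (f : polymap n) : Prop :=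
  is_aut f /\
  (forall y, Delta y <-> exists x, Delta x /\ pm_eval f x = y).

(** deg f <= d : every component has total degree <= d. *)
Definition pm_deg_le (n d : nat) (f : polymap n) : bool :=
  [forall i, (msize (tnth f i) <= d.+1)%N].

(** Coordinates of a polynomial map of degree <= d in the affine space
    End(A^n)_{<=d}: the coefficient of each monomial of degree <= d in each
    component. *)
Definition pm_coords (n d : nat) (f : polymap n) :
    ('I_n * 'X_{1..n < d.+1}) -> CC :=
  fun im => (tnth f im.1)@_(val im.2).

Definition zariski_closed (T : finType) (Z : (T -> CC) -> Prop) : Prop :=
  exists P : {mpoly CC[#|T|]} -> Prop,
    forall v : T -> CC,
      Z v <-> (forall p, P p -> p.@[fun k => v (enum_val k)] = 0).

(** A subset S of Aut(A^n) is closed for the ind-topology: for every d,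
    S cap Aut_{<=d} is Zariski closed in Aut_{<=d}, i.e. it is the trace on
    Aut_{<=d} of a Zariski closed subset of End_{<=d}. *)
Definition ind_closed (n : nat) (S : polymap n -> Prop) : Prop :=
  forall d : nat,
    exists Z : (('I_n * 'X_{1..n < d.+1}) -> CC) -> Prop,
      zariski_closed Z /\
      (forall f, is_aut f -> @pm_deg_le n d f -> (S f <-> Z (@pm_coords n d f))).

From HB Require Import structures.
From mathcomp Require Import all_boot all_order all_algebra.
From mathcomp Require Import Rstruct complex mpoly.
From mathcomp Require Import ring.
From Stdlib Require Import Classical FunctionalExtensionality PropExtensionality.

Set Implicit Arguments.
Unset Strict Implicit.
Unset Printing Implicit Defensive.
Import GRing.Theory Num.Theory.
Local Open Scope ring_scope.

(** Shears x_i |-> x_i + P_i(x_j) (i <> j), with polynomial interpolation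
    for the P_i, show that for n >= 2 the group Aut(A^n) acts transitively on
    duplicate-free tuples of points of any fixed length, and that the
    stabiliser of a finite set X acts transitively on such tuples having the
    same pattern of membership in X.

    Let H be a subgroup containing Stab(Delta) and some h with h(p) outside
    Delta for a p in Delta.  Moving h(Delta) by Stab(Delta) so that it avoids
    a chosen point of Delta and a chosen point q outside Delta, and then using
    the stabiliser of that image, H maps Delta onto Delta with that point
    replaced by q.  Replacing points one at a time, H maps Delta onto every
    set g(Delta), so every automorphism g lies in H Stab(Delta) = H.

    Closedness: f(Delta) is contained in Delta iff for all x in Delta and all
    choices of a coordinate c(y) for each y in Delta, the product over y of
    f(x)_{c(y)} - y_{c(y)} vanishes; for f of degree <= d each f(x)_i is an
    affine function of the coefficients of f. *)

Lemma comp_mpolyA (R : comNzRingType) (k l m : nat) (p : {mpoly R[k]})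
    (lq : k.-tuple {mpoly R[l]}) (lr : l.-tuple {mpoly R[m]}) :
  comp_mpoly lr (comp_mpoly lq p) =
  comp_mpoly [tuple comp_mpoly lr (tnth lq i) | i < k] p.
Proof.
rewrite [comp_mpoly lq p]comp_mpolyEX [in RHS](mpolyE p) !raddf_sum /=.
apply/eq_bigr => mon _; rewrite !comp_mpolyZ !comp_mpolyX rmorph_prod /=.
by congr (_ *: _); apply/eq_bigr => i _; rewrite rmorphXn /= tnth_mktuple.
Qed.

Notation point n := {ffun 'I_n -> CC}.

Section PolynomialMaps.
Variable n : nat.
Implicit Types (f g h : polymap n) (x : point n).

Definition pm_app f x : point n := [ffun i => (tnth f i).@[x]].

Lemma tnth_pm_comp f g i : tnth (pm_comp f g) i = comp_mpoly g (tnth f i).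
Proof. exact: tnth_mktuple. Qed.

Lemma tnth_pm_id i : tnth (pm_id n) i = 'X_i.
Proof. exact: tnth_mktuple. Qed.

Lemma pm_compA f g h : pm_comp f (pm_comp g h) = pm_comp (pm_comp f g) h.
Proof.
apply/eq_from_tnth => i.
rewrite [LHS]tnth_pm_comp [RHS]tnth_pm_comp [tnth (pm_comp f g) i]tnth_pm_comp.
by rewrite [RHS]comp_mpolyA.
Qed.

Lemma pm_comp_id f : pm_comp f (pm_id n) = f.
Proof. by apply/eq_from_tnth => i; rewrite [LHS]tnth_pm_comp comp_mpoly_id. Qed.

Lemma pm_id_comp f : pm_comp (pm_id n) f = f.
Proof.
by apply/eq_from_tnth => i; rewrite [LHS]tnth_pm_comp tnth_pm_id comp_mpolyXU -tnth_nth.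
Qed.

Lemma pm_app_comp f g x : pm_app (pm_comp f g) x = pm_app f (pm_app g x).
Proof.
apply/ffunP => i; rewrite !ffunE tnth_pm_comp comp_mpoly_meval.
by apply: meval_eq => j; rewrite ffunE.
Qed.

Lemma pm_app_id x : pm_app (pm_id n) x = x.
Proof. by apply/ffunP => i; rewrite ffunE tnth_pm_id mevalXU. Qed.

Lemma pm_appK f g : pm_comp g f = pm_id n -> cancel (pm_app f) (pm_app g).
Proof. by move=> gf x; rewrite -pm_app_comp gf pm_app_id. Qed.

Lemma map_pm_app_comp f g s :
  map (pm_app (pm_comp f g)) s = map (pm_app f) (map (pm_app g) s).
Proof. by rewrite -map_comp; apply: eq_map => x; apply: pm_app_comp. Qed.

Lemma map_pm_app_id s : map (pm_app (pm_id n)) s = s.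
Proof. by rewrite map_id_in // => x _; apply: pm_app_id. Qed.

Lemma map_pm_appK f g s : pm_comp g f = pm_id n ->
  map (pm_app g) (map (pm_app f) s) = s.
Proof. by move=> gf; rewrite -map_pm_app_comp gf map_pm_app_id. Qed.

Lemma is_aut_id : is_aut (pm_id n).
Proof. by exists (pm_id n); rewrite pm_comp_id. Qed.

Lemma is_aut_comp f g : is_aut f -> is_aut g -> is_aut (pm_comp f g).
Proof.
move=> [f' [ff' f'f]] [g' [gg' g'g]]; exists (pm_comp g' f'); split.
  by rewrite -pm_compA (pm_compA g) gg' pm_id_comp ff'.
by rewrite -pm_compA (pm_compA f') f'f pm_id_comp g'g.
Qed.

Lemma is_aut_inv f g : pm_comp f g = pm_id n -> pm_comp g f = pm_id n -> is_aut g.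
Proof. by exists f. Qed.

Lemma pm_app_inj f : is_aut f -> injective (pm_app f).
Proof. by move=> [g [_ gf]]; apply: can_inj (pm_appK gf). Qed.

Definition mpoly_at (j : 'I_n) (P : {poly CC}) : {mpoly CC[n]} :=
  (map_poly (@mpolyC n CC) P).['X_j].

Lemma comp_mpoly_at j P (lq : polymap n) :
  comp_mpoly lq (mpoly_at j P) = (map_poly (@mpolyC n CC) P).[tnth lq j].
Proof.
rewrite /mpoly_at -horner_map /= -map_poly_comp comp_mpolyXU -tnth_nth.
by congr (_.[_]); apply: eq_map_poly => c /=; rewrite comp_mpolyC.
Qed.

Lemma meval_mpoly_at j P x : (mpoly_at j P).@[x] = P.[x j].
Proof.
rewrite /mpoly_at -horner_map /= -map_poly_comp mevalXU.
by rewrite map_poly_id //= => c _; rewrite mevalC.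
Qed.

Lemma mpoly_at0 j : mpoly_at j 0 = 0.
Proof. by rewrite /mpoly_at rmorph0 horner0. Qed.

Lemma mpoly_atD j P Q : mpoly_at j (P + Q) = mpoly_at j P + mpoly_at j Q.
Proof. by rewrite /mpoly_at rmorphD hornerD. Qed.

Definition shear (j : 'I_n) (P : 'I_n -> {poly CC}) : polymap n :=
  [tuple 'X_i + mpoly_at j (P i) | i < n].

Lemma pm_app_shear j P x : pm_app (shear j P) x = [ffun i => x i + (P i).[x j]].
Proof.
by apply/ffunP => i; rewrite !ffunE tnth_mktuple mevalD mevalXU meval_mpoly_at.
Qed.

Lemma shear_comp j P Q : Q j = 0 ->
  pm_comp (shear j P) (shear j Q) = shear j (fun i => Q i + P i).
Proof.
move=> Qj; apply/eq_from_tnth => i; rewrite [LHS]tnth_pm_comp !tnth_mktuple.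
rewrite comp_mpolyD comp_mpolyXU -tnth_nth comp_mpoly_at !tnth_mktuple.
by rewrite Qj mpoly_at0 addr0 mpoly_atD addrA.
Qed.

Lemma shear0 j : shear j (fun=> 0) = pm_id n.
Proof.
by apply/eq_from_tnth => i; rewrite !tnth_mktuple mpoly_at0 addr0.
Qed.

Lemma is_aut_shear j P : P j = 0 -> is_aut (shear j P).
Proof.
move=> Pj; apply: (@is_aut_inv (shear j (fun i => - P i))).
  rewrite shear_comp // -(shear0 j); congr shear.
  by apply: functional_extensionality => i; rewrite subrr.
rewrite shear_comp ?Pj ?oppr0 // -(shear0 j); congr shear.
by apply: functional_extensionality => i; rewrite addNr.
Qed.

End PolynomialMaps.

(* Otherwise unification unfolds compositions into tuples of polynomials. *)
Local Opaque pm_comp.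

Lemma map_index_iota (T : eqType) (s : seq T) :
  uniq s -> [seq index x s | x <- s] = iota 0 (size s).
Proof.
case: s => [//|x0 s'] us; apply: (@eq_from_nth _ 0%N); rewrite size_map ?size_iota //.
by move=> i lti; rewrite (nth_map x0) // index_uniq // nth_iota.
Qed.

Lemma exists_notin (R : numDomainType) (L : seq R) : exists c : R, c \notin L.
Proof.
pose cands := [seq i%:R : R | i <- iota 0 (size L).+1].
have ucands : uniq cands.
  by rewrite map_inj_uniq ?iota_uniq // => i j /eqP; rewrite eqr_nat => /eqP.
have /hasP [c _ cL] : has (fun c => c \notin L) cands.
  apply: contraT; rewrite -all_predC => /allP candsL.
  have /(uniq_leq_size ucands) : {subset cands <= L}.
    by move=> c /candsL /negPn.
  by rewrite size_map size_iota ltnn.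
by exists c.
Qed.

(** Newton's form of the interpolation polynomial of [v] at the nodes [xs]. *)
Fixpoint interp (F : fieldType) (xs : seq F) (v : F -> F) : {poly F} :=
  if xs is a :: xs' then
    let P := interp xs' v in let W := \prod_(y <- xs') ('X - y%:P) in
    P + ((v a - P.[a]) / W.[a]) *: W
  else 0.

Lemma horner_interp (F : fieldType) (xs : seq F) (v : F -> F) :
  uniq xs -> {in xs, forall x, (interp xs v).[x] = v x}.
Proof.
elim: xs => [//|a xs IH] /= /andP [axs /IH IHv].
set P := interp xs v; set W := \prod_(y <- xs) ('X - y%:P).
have Wa : W.[a] != 0.
  rewrite horner_prod prodf_seq_neq0; apply/allP => y yxs /=.
  by rewrite hornerXsubC subr_eq0; apply: contra axs => /eqP ->.
move=> x; rewrite inE hornerD hornerZ => /orP [/eqP -> | xxs].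
  by rewrite mulfVK // subrKC.
have -> : W.[x] = 0.
  apply/eqP; rewrite horner_prod prodf_seq_eq0; apply/hasP; exists x => //=.
  by rewrite hornerXsubC subrr.
by rewrite IHv // mulr0 addr0.
Qed.

Lemma exists_separating_scalar (R : numFieldType) (S : seq (R * R)) :
  exists l : R, {in S &, forall u v, u.1 + l * u.2 = v.1 + l * v.2 -> u = v}.
Proof.
have [l lS] := exists_notin [seq (v.1 - u.1) / (u.2 - v.2) | u <- S, v <- S].
exists l => -[u1 u2] [v1 v2] uS vS /= E.
have [e2 | ne2] := eqVneq u2 v2; first by move: E; rewrite e2 => /addIr ->.
case/negP: lS; apply/allpairsP; exists ((u1, u2), (v1, v2)); split => //=.
have d0 : u2 - v2 != 0 by rewrite subr_eq0.
apply: (mulIf d0); rewrite divfK //; apply/eqP; rewrite -subr_eq0; apply/eqP.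
by transitivity ((u1 + l * u2) - (v1 + l * v2)); [ring | rewrite E subrr].
Qed.

Lemma fresh_point n (i : 'I_n) (L : seq (point n)) : exists x : point n, x \notin L.
Proof.
have [c cL] := exists_notin [seq (x : point n) i | x <- L].
exists [ffun=> c]; apply: contra cL => cL.
by apply/mapP; exists [ffun=> c]; rewrite ?ffunE.
Qed.

Lemma fresh_points n (i : 'I_n) (m : nat) (L : seq (point n)) :
  exists s : seq (point n), [/\ size s = m, uniq s & all (fun x => x \notin L) s].
Proof.
elim: m => [|m [s [sz us sL]]]; first by exists [::].
have [x] := fresh_point i (L ++ s); rewrite mem_cat negb_or => /andP [xL xs].
by exists (x :: s); rewrite /= sz xs us xL sL.
Qed.

Definition stab n (X : seq (point n)) (f : polymap n) :=
  is_aut f /\ {in X, forall x, pm_app f x \in X}.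

Section StabSubgroup.
Variable n : nat.
Variable D : seq (point n).
Hypothesis uD : uniq D.

Lemma stab_onto f : stab D f -> {subset D <= map (pm_app f) D}.
Proof.
case=> af fD; have ufD : uniq (map (pm_app f) D).
  by rewrite map_inj_uniq //; apply: pm_app_inj.
have fD_sub : {subset map (pm_app f) D <= D} by move=> _ /mapP [x xD ->]; apply: fD.
have [_ E] := uniq_min_size ufD fD_sub (eq_leq (esym (size_map _ _))).
by move=> x; rewrite E.
Qed.

Lemma stab_subgroup : is_subgroup_aut (stab D).
Proof.
split=> [f [] // | | f g [af fD] [ag gD] | f g sf fg gf].
- by split=> [|x xD]; [apply: is_aut_id | rewrite pm_app_id].
- split=> [|x xD]; first exact: is_aut_comp.
  by rewrite pm_app_comp; apply/fD/gD.
split=> [|x /(stab_onto sf) /mapP [z zD ->]]; first exact: is_aut_inv fg gf.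
by rewrite (pm_appK gf).
Qed.

End StabSubgroup.

Section Transitivity.
Variable n : nat.
Hypothesis n_gt1 : (1 < n)%N.
Let i0 : 'I_n := Ordinal (ltnW n_gt1).
Let i1 : 'I_n := Ordinal n_gt1.
Let i1_neq_i0 : (i1 == i0) = false. Proof. by []. Qed.
Implicit Types (A B X : seq (point n)).

Lemma separating_shear B (j : 'I_n) : j != i0 ->
  exists f, [/\ is_aut f, forall x i, i != i0 -> pm_app f x i = x i &
    {in B &, forall x y, pm_app f x i0 = pm_app f y i0 -> x i0 = y i0 /\ x j = y j}].
Proof.
move=> ji0.
have [l lB] := exists_separating_scalar [seq ((x : point n) i0, x j) | x <- B].
pose P i : {poly CC} := if i == i0 then l *: 'X else 0.
exists (shear j P); split; first by apply: is_aut_shear; rewrite /P (negbTE ji0).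
  by move=> x i ii0; rewrite pm_app_shear ffunE /P (negbTE ii0) horner0 addr0.
move=> x y xB yB; rewrite !pm_app_shear !ffunE /P eqxx !hornerZ !hornerX => E.
by case: (lB _ _ (map_f _ xB) (map_f _ yB) E).
Qed.

Lemma separating_aut_lt A k : (0 < k <= n)%N ->
  exists f, is_aut f /\ {in map (pm_app f) A &, forall x y : point n,
    x i0 = y i0 -> forall i : 'I_n, (i < k)%N -> x i = y i}.
Proof.
elim: k => [//|k IH] /andP [_ lt_kn].
have [-> | k_gt0] := posnP k.
  exists (pm_id n); split=> [|x y _ _ e i]; first exact: is_aut_id.
  by rewrite ltnS leqn0 => /eqP i_0; rewrite (_ : i = i0) //; apply: val_inj.
have := IH; rewrite k_gt0 (ltnW lt_kn) => /(_ isT) [f [af detf]].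
pose j : 'I_n := Ordinal lt_kn.
have ji0 : j != i0 by rewrite -val_eqE /= -lt0n.
have [g [ag gfix gsep]] := separating_shear (map (pm_app f) A) ji0.
exists (pm_comp g f); split; first exact: is_aut_comp.
rewrite map_pm_app_comp => _ _ /mapP [x xB ->] /mapP [y yB ->] E i.
have [e0 ej] := gsep x y xB yB E.
have [-> // | ii0] := eqVneq i i0.
rewrite !gfix // ltnS leq_eqVlt => /orP [/eqP ik | ik]; last exact: detf.
by rewrite (_ : i = j) //; apply: val_inj.
Qed.

Lemma separating_aut A : exists f, is_aut f /\
  {in map (pm_app f) A &, injective (fun x : point n => x i0)}.
Proof.
have := @separating_aut_lt A n; rewrite ltnW // leqnn => /(_ isT) [f [af detf]].
by exists f; split=> // x y xA yA e; apply/ffunP => i; apply: detf.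
Qed.

Lemma shear_onto (j : 'I_n) B (t : point n -> point n) :
  uniq B -> {in B &, injective (fun x : point n => x j)} ->
  {in B, forall x, t x j = x j} ->
  exists f, is_aut f /\ {in B, forall x, pm_app f x = t x}.
Proof.
move=> uB injBj tj; set xs := [seq (x : point n) j | x <- B].
have uxs : uniq xs by rewrite map_inj_in_uniq.
pose b c := nth [ffun=> 0] B (index c xs).
pose P i := if i == j then 0 else interp xs (fun c => t (b c) i - b c i).
exists (shear j P); split; first by apply: is_aut_shear; rewrite /P eqxx.
move=> x xB; apply/ffunP => i; rewrite pm_app_shear ffunE /P.
have [-> | ij] := eqVneq i j; first by rewrite horner0 addr0 tj.
have xj : x j \in xs by apply: map_f.
by rewrite horner_interp //= /b /xs nth_index_map // subrKC.
Qed.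

Definition std_point (k : nat) : point n := [ffun i => if i == i1 then k%:R else 0].

Lemma aut_onto_std A : uniq A ->
  exists f, is_aut f /\ map (pm_app f) A = mkseq std_point (size A).
Proof.
move=> uA; have [f1 [af1 injB]] := separating_aut A.
set B := map (pm_app f1) A.
have uB : uniq B by rewrite map_inj_uniq //; apply: pm_app_inj.
pose t2 (x : point n) : point n :=
  [ffun i => if i == i0 then x i0 else if i == i1 then (index x B)%:R else 0].
pose t3 (y : point n) : point n := [ffun i => if i == i1 then y i1 else 0].
have [f2 [af2 f2B]] := @shear_onto i0 B t2 uB injB (fun x _ => ffunE _ _).
have t2_i1 x : t2 x i1 = (index x B)%:R by rewrite ffunE i1_neq_i0 eqxx.
have inj_t2 : {in B &, injective (fun x => t2 x i1)}.
  move=> x y xB yB; rewrite !t2_i1 => /eqP; rewrite eqr_nat => /eqP e.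
  by rewrite -(nth_index x xB) -(nth_index x yB) e.
have [f3 [af3 f3C]] : exists f3, is_aut f3 /\
    {in map t2 B, forall y, pm_app f3 y = t3 y}.
  apply: (@shear_onto i1) => [||y _]; last by rewrite ffunE eqxx.
    rewrite map_inj_in_uniq // => x y xB yB e.
    by apply: inj_t2 => //=; rewrite e.
  by move=> _ _ /mapP [x xB ->] /mapP [y yB ->] /inj_t2 ->.
exists (pm_comp f3 (pm_comp f2 f1)).
split; first exact: is_aut_comp af3 (is_aut_comp af2 af1).
have -> : map (pm_app (pm_comp f3 (pm_comp f2 f1))) A =
          map (fun x => std_point (index x A)) A.
  apply/eq_in_map => x xA; rewrite !pm_app_comp f2B ?map_f // f3C ?map_f ?map_f //.
  apply/ffunP => i; rewrite [LHS]ffunE t2_i1 ffunE /B index_map //.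
  exact: pm_app_inj.
by rewrite /mkseq -map_index_iota // -map_comp.
Qed.

Lemma aut_transitive A B : uniq A -> uniq B -> size A = size B ->
  exists f, is_aut f /\ map (pm_app f) A = B.
Proof.
move=> uA uB sAB.
have [fA [afA fAA]] := aut_onto_std uA.
have [fB [[gB [fBgB gBfB]] fBB]] := aut_onto_std uB.
exists (pm_comp gB fA); split; first exact: is_aut_comp (is_aut_inv fBgB gBfB) afA.
by rewrite map_pm_app_comp fAA sAB -fBB map_pm_appK.
Qed.

Lemma stab_transitive X a b : uniq X -> uniq a -> uniq b ->
  [seq x \in X | x <- a] = [seq x \in X | x <- b] ->
  exists f, stab X f /\ map (pm_app f) a = b.
Proof.
move=> uX ua ub pat.
have sab : size a = size b by rewrite -(size_map (mem X) a) pat size_map.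
pose ext s := s ++ [seq x <- X | x \notin s].
have uext s : uniq s -> uniq (ext s).
  move=> us; rewrite cat_uniq us filter_uniq // andbT.
  by apply/hasPn => x; rewrite mem_filter => /andP [].
have count_in s : uniq s -> count (mem s) X = count (mem X) s.
  move=> us; rewrite -!size_filter; apply/perm_size/uniq_perm; rewrite ?filter_uniq //.
  by move=> x; rewrite !mem_filter andbC.
have sext : size (ext a) = size (ext b).
  rewrite !size_cat !size_filter sab; congr addn; apply/eqP.
  rewrite -(eqn_add2l (count (mem a) X)) count_predC count_in //.
  by rewrite -(count_map _ id) pat count_map -count_in // count_predC.
have [f [af]] := aut_transitive (uext a ua) (uext b ub) sext.
rewrite map_cat => /eqP; rewrite eqseq_cat ?size_map // => /andP [/eqP fab /eqP frest].
exists f; split=> //; split=> // x xX.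
have [xa | xa] := boolP (x \in a).
  have memf : {in a, forall y, (pm_app f y \in X) = (y \in X)}.
    by apply/eq_in_map; rewrite (map_comp (mem X)) fab pat.
  by rewrite memf.
have : pm_app f x \in map (pm_app f) [seq y <- X | y \notin a].
  by apply: map_f; rewrite mem_filter xa.
by rewrite frest mem_filter => /andP [].
Qed.

End Transitivity.

Lemma pm_comp_conjK n (f k k' : polymap n) : pm_comp k k' = pm_id n ->
  pm_comp (pm_comp k (pm_comp k' (pm_comp f k))) k' = f.
Proof.
by move=> kk'; rewrite pm_compA kk' pm_id_comp -pm_compA kk' pm_comp_id.
Qed.

Lemma uniq_replace (T : eqType) (p s : seq T) (x y : T) :
  uniq (p ++ x :: s) -> y \notin p ++ x :: s -> uniq (p ++ y :: s).
Proof.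
rewrite (uniq_catCA p [:: x] s) (uniq_catCA p [:: y] s) /= !mem_cat !inE !negb_or.
by case/andP=> _ -> /and3P [-> _ ->].
Qed.

Section Subgroups.
Variables (n : nat) (H : polymap n -> Prop).
Hypothesis H_subgroup : is_subgroup_aut H.

Lemma subgroup_aut f : H f -> is_aut f.
Proof. by case: H_subgroup => + _ _ _; apply. Qed.

Lemma subgroup_comp f g : H f -> H g -> H (pm_comp f g).
Proof. by case: H_subgroup => _ _ + _; apply. Qed.

Lemma subgroup_inv f :
  H f -> exists g, [/\ H g, pm_comp f g = pm_id n & pm_comp g f = pm_id n].
Proof.
move=> Hf; have [g [fg gf]] := subgroup_aut Hf.
by exists g; split=> //; case: H_subgroup => _ _ _ /(_ f g Hf fg gf).
Qed.

End Subgroups.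

Section Maximality.
Variable n : nat.
Hypothesis n_gt1 : (1 < n)%N.
Let i0 : 'I_n := Ordinal (ltnW n_gt1).
Let x0 : point n := [ffun=> 0].
Implicit Types (X e : seq (point n)).

Lemma stab_avoid X e (y q : point n) : uniq X -> uniq e -> (size e <= size X)%N ->
  has (fun z => z \notin X) e -> q \notin X ->
  exists f, [/\ stab X f, y \notin map (pm_app f) e & q \notin map (pm_app f) e].
Proof.
move=> uX ue le_eX outX qX.
have [w wX we] : exists2 w, w \in X & w \notin e.
  apply/hasP; apply: contraT; rewrite -all_predC => /allP /= Xe.
  have /(uniq_leq_size uX) : {subset X <= [seq z <- e | z \in X]}.
    by move=> w wX; rewrite mem_filter wX -[w \in e]negbK Xe.
  rewrite size_filter => le_Xc; have : (count (mem X) e < size e)%N.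
    by rewrite -(count_predC (mem X) e) -{1}[count _ e]addn0 ltn_add2l -has_count.
  by rewrite ltnNge (leq_trans le_eX le_Xc).
have [cs [scs ucs csX]] := fresh_points i0 (size e) (y :: q :: X).
have cs_fresh z : z \in e -> nth x0 cs (index z e) \notin y :: q :: X.
  by move=> ze; apply: (allP csX); rewrite mem_nth // scs index_mem.
pose phi z := if z \in X then (if z == y then w else z) else nth x0 cs (index z e).
have mem_phi : {in e, forall z, (phi z \in X) = (z \in X)}.
  move=> z ze; rewrite /phi; case: ifP => [zX | _]; first by case: (z == y).
  by apply/negbTE; move: (cs_fresh z ze); rewrite !inE !negb_or => /and3P [].
have phi_inj : {in e &, injective phi}.
  move=> z z' ze z'e E.
  have eX : (z \in X) = (z' \in X) by rewrite -mem_phi // E mem_phi.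
  rewrite /phi -eX in E; case: ifP E => zX.
    case E1 : (z == y); case E2 : (z' == y) => E.
    - by rewrite (eqP E1) (eqP E2).
    - by rewrite E z'e in we.
    - by rewrite -E ze in we.
    - exact: E.
  move/eqP; rewrite nth_uniq ?scs ?index_mem // => /eqP E.
  by rewrite -(nth_index x0 ze) E nth_index.
have [f [sf fe]] : exists f, stab X f /\ map (pm_app f) e = map phi e.
  apply: stab_transitive; rewrite ?map_inj_in_uniq //.
  by rewrite -map_comp; apply/eq_in_map => z ze /=; rewrite mem_phi.
exists f; split; rewrite // fe; apply/mapP => -[z ze]; rewrite /phi.
  case: ifP => zX; last by move=> yz; move: (cs_fresh z ze); rewrite -yz inE eqxx.
  case: eqP => [zy yw | zy yz]; last exact: zy (esym yz).
  by move: we; rewrite -yw -zy ze.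
case: ifP => zX qz; last by move: (cs_fresh z ze); rewrite -qz !inE eqxx orbT.
by move: (mem_phi z ze); rewrite /phi zX -qz (negbTE qX).
Qed.

Variable H : polymap n -> Prop.
Hypothesis H_subgroup : is_subgroup_aut H.
Variable D : seq (point n).
Hypothesis uD : uniq D.
Hypothesis stab_sub : forall f, stab D f -> H f.

Lemma stab_image_sub k f : H k -> stab (map (pm_app k) D) f -> H f.
Proof.
move=> Hk [af fkD]; have [k' [Hk' kk' k'k]] := subgroup_inv H_subgroup Hk.
have ak := subgroup_aut H_subgroup Hk; have ak' := subgroup_aut H_subgroup Hk'.
have Hconj : H (pm_comp k' (pm_comp f k)).
  apply: stab_sub; split; first exact: is_aut_comp ak' (is_aut_comp af ak).
  move=> x xD; rewrite !pm_app_comp.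
  have /fkD /mapP [z zD ->] : pm_app k x \in map (pm_app k) D by apply: map_f.
  by rewrite (pm_appK k'k).
rewrite -(pm_comp_conjK f kk').
exact: (subgroup_comp H_subgroup (subgroup_comp H_subgroup Hk Hconj) Hk').
Qed.

Definition reachable e := exists k, H k /\ map (pm_app k) D = e.

Lemma reachable_uniq e : reachable e -> uniq e.
Proof.
case=> k [Hk <-]; rewrite map_inj_uniq //.
exact: (pm_app_inj (subgroup_aut H_subgroup Hk)).
Qed.

Variables (h : polymap n) (p0 : point n).
Hypotheses (Hh : H h) (p0D : p0 \in D) (hp0 : pm_app h p0 \notin D).

Lemma reachable_replace_D p x s q :
  D = p ++ x :: s -> q \notin D -> reachable (p ++ q :: s).
Proof.
move=> eD qD; set e := map (pm_app h) D.
have ah := subgroup_aut H_subgroup Hh.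
have [f [sf xfe qfe]] : exists f, [/\ stab D f, x \notin map (pm_app f) e
                                             & q \notin map (pm_app f) e].
  apply: stab_avoid; rewrite ?map_inj_uniq ?size_map //; first exact: pm_app_inj.
  by apply/hasP; exists (pm_app h p0); rewrite ?map_f.
set g := map (pm_app f) e.
have Hfh : H (pm_comp f h) := subgroup_comp H_subgroup (stab_sub sf) Hh.
have eg : map (pm_app (pm_comp f h)) D = g by rewrite map_pm_app_comp.
have ug : uniq g by rewrite -eg (reachable_uniq (ex_intro _ _ (conj Hfh erefl))).
have [f' [sf' f'D]] : exists f', stab g f' /\ map (pm_app f') D = p ++ q :: s.
  apply: stab_transitive => //; first by apply: (@uniq_replace _ p s x); rewrite -eD.
  by rewrite eD !map_cat /= (negbTE xfe) (negbTE qfe).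
by exists f'; split=> //; apply: stab_image_sub Hfh _; rewrite eg.
Qed.

Lemma reachable_D : reachable D.
Proof.
by exists (pm_id n); split; [case: H_subgroup | apply: map_pm_app_id].
Qed.

Lemma reachable_replace p x s y : reachable (p ++ x :: s) ->
  y \notin p ++ x :: s -> reachable (p ++ y :: s).
Proof.
case=> k [Hk ekD] ye; have [k' [Hk' kk' k'k]] := subgroup_inv H_subgroup Hk.
have eD : D = map (pm_app k') p ++ pm_app k' x :: map (pm_app k') s.
  by rewrite -[LHS](map_pm_appK _ k'k) ekD map_cat.
have y'D : pm_app k' y \notin D.
  by apply: contra ye; rewrite -ekD => /(map_f (pm_app k)); rewrite (pm_appK kk').
have [k2 [Hk2 ek2]] := reachable_replace_D eD y'D.
exists (pm_comp k k2); split; first exact: (subgroup_comp H_subgroup Hk Hk2).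
by rewrite map_pm_app_comp ek2 map_cat /= (pm_appK kk') !map_pm_appK.
Qed.

Lemma reachable_replace_all p a b : reachable (p ++ a) -> uniq b ->
  size b = size a -> {in b, forall y, y \notin p ++ a} -> reachable (p ++ b).
Proof.
elim: b a p => [|y b IH] [|x a] p //= Rpa /andP [yb ub] [sba] bpa.
have /(reachable_replace Rpa) : y \notin p ++ x :: a by apply: bpa; rewrite mem_head.
rewrite -!cat_rcons => /IH; apply=> // z zb.
have zy : (z == y) = false by apply: contraNF yb => /eqP <-.
have zyb : z \in y :: b by rewrite inE zb orbT.
have := bpa z zyb; rewrite cat_rcons !mem_cat !inE zy !negb_or.
by case/and3P=> -> _ ->.
Qed.

Lemma aut_in_H g : is_aut g -> H g.
Proof.
move=> ag; set e := map (pm_app g) D.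
have ue : uniq e by rewrite map_inj_uniq //; apply: pm_app_inj.
have [cs [scs ucs csDe]] := fresh_points i0 (size D) (D ++ e).
have cs_fresh z : z \in cs -> (z \notin D) && (z \notin e).
  by move/(allP csDe); rewrite mem_cat negb_or.
have Rcs : reachable cs.
  apply: (@reachable_replace_all [::] D) reachable_D ucs scs _.
  by move=> z /cs_fresh /andP [].
have [k [Hk ekD]] : reachable e.
  apply: (@reachable_replace_all [::] cs) Rcs ue _ _; first by rewrite size_map scs.
  by move=> z ze; apply/negP => /cs_fresh; rewrite ze andbF.
have [k' [Hk' kk' k'k]] := subgroup_inv H_subgroup Hk.
have Hk'g : H (pm_comp k' g).
  apply: stab_sub; split; first exact: (is_aut_comp (subgroup_aut H_subgroup Hk') ag).
  move=> x xD; rewrite pm_app_comp.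
  have /mapP [z zD ->] : pm_app g x \in map (pm_app k) D by rewrite ekD map_f.
  by rewrite (pm_appK k'k).
have -> : g = pm_comp k (pm_comp k' g) by rewrite pm_compA kk' pm_id_comp.
exact: (subgroup_comp H_subgroup Hk Hk'g).
Qed.

End Maximality.

Lemma mem_prod_eq0 (I : finType) (R : idomainType) (i0 : I)
    (D : seq {ffun I -> R}) (e : {ffun I -> R}) :
  e \in D <-> forall c : nat -> I,
    \prod_(t < size D) (e (c t) - (nth [ffun=> 0] D t) (c t)) = 0.
Proof.
split=> [eD c | prod0].
  have eD' : (index e D < size D)%N by rewrite index_mem.
  by apply/eqP/prodf_eq0; exists (Ordinal eD') => //=; rewrite nth_index // subrr.
apply: contraT => eD.
pose c t := odflt i0 [pick i | e i != (nth [ffun=> 0] D t) i].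
have /eqP/prodf_eq0 [t _] := prod0 c; rewrite subr_eq0 /c.
case: pickP => [i /negbTE -> // | eqDt] _.
move: eD; rewrite (_ : e = nth [ffun=> 0] D t) ?mem_nth //.
by apply/ffunP => i; apply/eqP; move/negbT: (eqDt i); rewrite negbK.
Qed.

Section StabClosed.
Variables n d : nat.
Let T : finType := ('I_n * 'X_{1..n < d.+1})%type.

(** [eval_form x i c] is the affine form in the coordinates [pm_coords f]
    whose value is [f(x)_i - c], when [f] has degree at most [d]. *)
Definition eval_form (x : point n) (i : 'I_n) (c : CC) : {mpoly CC[#|T|]} :=
  \sum_(k < #|T|) ((((enum_val k).1 == i)%:R *
     \prod_(j < n) x j ^+ (val (enum_val k).2 j)) *: 'X_k) - c%:MP.

Lemma meval_eval_form x i c (f : polymap n) : pm_deg_le d f ->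
  (eval_form x i c).@[fun k => pm_coords f (enum_val k)] = (tnth f i).@[x] - c.
Proof.
move=> /forallP /(_ i) szf; rewrite mevalB mevalC raddf_sum /=; congr (_ - _).
under eq_bigr => k _ do rewrite mevalZ mevalXU.
pose G (t : T) := ((t.1 == i)%:R * \prod_(j < n) x j ^+ (val t.2 j)) * pm_coords f t.
rewrite -(big_enum_val G) (eq_bigl xpredT) // -(pair_bigA _ (fun a m => G (a, m))).
rewrite (bigD1 i) //= [X in _ + X]big1 ?addr0; last first.
  by move=> a ai; apply: big1 => m _; rewrite /G /= (negbTE ai) !mul0r.
rewrite [in RHS](mpolywE szf) raddf_sum /=; apply: eq_bigr => m _.
by rewrite /G /= eqxx mul1r mevalZ mevalX /pm_coords /= mulrC.
Qed.

Lemma stab_zariski_closed (i0 : 'I_n) (D : seq (point n)) :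
  exists Z : (T -> CC) -> Prop, zariski_closed Z /\ forall f, pm_deg_le d f ->
    (Z (pm_coords f) <-> {in D, forall x, pm_app f x \in D}).
Proof.
pose eq_poly x (c : nat -> 'I_n) :=
  \prod_(t < size D) eval_form x (c t) ((nth [ffun=> 0] D t) (c t)).
pose eqs p := exists2 x, x \in D & exists c, p = eq_poly x c.
exists (fun v => forall p, eqs p -> p.@[fun k => v (enum_val k)] = 0).
split=> [|f df]; first by exists eqs.
have meval_eqs x c : (eq_poly x c).@[fun k => pm_coords f (enum_val k)] =
    \prod_(t < size D) (pm_app f x (c t) - (nth [ffun=> 0] D t) (c t)).
  rewrite /eq_poly rmorph_prod /=; apply: eq_bigr => t _.
  by rewrite meval_eval_form // ffunE.
split=> [Z0 x xD | fD p [x xD [c ->]]]; last first.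
  by rewrite meval_eqs; move/(mem_prod_eq0 i0): (fD x xD).
apply/(mem_prod_eq0 i0) => c; rewrite -meval_eqs.
by apply: Z0; exists x => //; exists c.
Qed.

End StabClosed.

Lemma stab_ind_closed n (i0 : 'I_n) (D : seq (point n)) : ind_closed (stab D).
Proof.
move=> d; have [Z [cZ ZE]] := stab_zariski_closed d i0 D.
by exists Z; split=> // f af df; rewrite ZE //; split=> [[]|].
Qed.

Section StabMaximal.
Variable n : nat.
Variable D : seq (point n).
Hypothesis uD : uniq D.
Hypothesis n_gt1 : (1 < n)%N.
Hypothesis D_neq0 : D != [::].
Let i0 : 'I_n := Ordinal (ltnW n_gt1).

Lemma stab_maximal : is_maximal_subgroup_aut (stab D).
Proof.
split; first exact: stab_subgroup.
  case: D D_neq0 uD => [//|y D'] _ _; have [q qD] := fresh_point i0 (y :: D').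
  have [f [af [fy]]] := @aut_transitive n n_gt1 [:: y] [:: q] erefl erefl erefl.
  by exists f; split=> // -[_ /(_ y (mem_head _ _))]; rewrite fy (negbTE qD).
move=> H H_subgroup stab_sub.
have [HD | ] := classic (forall f, H f -> stab D f); first by left.
case/not_all_ex_not=> h /(@imply_to_and (H h)) [Hh not_stab_h]; right.
have /allPn [p0 p0D hp0] : ~~ all (fun x => pm_app h x \in D) D.
  by apply/negP => /allP hD; apply: not_stab_h; split=> //; apply: subgroup_aut Hh.
by move=> g; apply: (aut_in_H n_gt1 H_subgroup uD stab_sub Hh p0D hp0).
Qed.

End StabMaximal.

Lemma StabE n (Delta : ('I_n -> CC) -> Prop) (D : seq (point n)) :
  uniq D -> (forall x, Delta x <-> finfun x \in D) -> Stab Delta = stab D.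
Proof.
move=> uD DeltaE; apply: functional_extensionality => f.
have finfunK (z : point n) : finfun z = z by apply/ffunP => i; rewrite ffunE.
have pm_evalE x : finfun (pm_eval f x) = pm_app f (finfun x).
  by apply/ffunP => i; rewrite !ffunE; apply: meval_eq => j; rewrite ffunE.
apply: propositional_extensionality; split=> [[af fD] | [af fD]].
  split=> // z zD; have Dz : Delta z by rewrite DeltaE finfunK.
  have /fD : exists x, Delta x /\ pm_eval f x = pm_eval f z by exists z.
  by rewrite DeltaE pm_evalE finfunK.
split=> // y; split=> [|[x [Dx <-]]]; last first.
  by rewrite DeltaE pm_evalE; apply: fD; rewrite -DeltaE.
move=> /DeltaE /(stab_onto uD (conj af fD)) /mapP [z zD fzy].
exists z; split; first by rewrite DeltaE finfunK.
by apply: functional_extensionality => i; rewrite -(ffunE y i) fzy ffunE.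
Qed.

Lemma In_mem_map (T : Type) (U : eqType) (g : T -> U) (s : seq T) (x : T) :
  injective g -> List.In x s <-> g x \in map g s.
Proof.
move=> g_inj; elim: s => [|y s IH] //=; rewrite inE.
split=> [[-> | /IH ->] | /orP [/eqP /g_inj -> | /IH]]; rewrite ?eqxx ?orbT; auto.
Qed.

Lemma finfun_inj n : injective (@finfun 'I_n (fun=> CC)).
Proof.
move=> x y /ffunP e; apply: functional_extensionality => i.
by have := e i; rewrite !ffunE.
Qed.

Theorem proposition3p26 (n : nat) (Hn : (2 <= n)%N)
    (Delta : ('I_n -> CC) -> Prop)
    (Hfin : exists s : seq ('I_n -> CC), forall x, Delta x <-> List.In x s)
    (Hne : exists x, Delta x) :
  is_maximal_subgroup_aut (Stab Delta) /\ ind_closed (Stab Delta).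
Proof.
have [s Hs] := Hfin; have [x Dx] := Hne.
pose D := undup (map finfun s).
have DeltaE y : Delta y <-> finfun y \in D.
  by rewrite Hs mem_undup; apply: In_mem_map; apply: finfun_inj.
have D_neq0 : D != [::] by apply: contraTneq ((DeltaE x).1 Dx) => ->.
rewrite (StabE (undup_uniq _) DeltaE).
split; first by apply: stab_maximal; rewrite ?undup_uniq.
exact: stab_ind_closed (Ordinal (ltnW Hn)) D.
Qed.
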